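(* Let $G$ be a connected graph with $n$ vertices, where $n$ is a multiple of $3$. If $G$ contains a cycle of length at least $4$, then $G$ is detachable.
   Context: A connected graph $G$ with $n$ vertices, $n$ a multiple of $3$, is detachable if its vertex set can be partitioned into two nonempty sets $V_1,V_2$ such that $|V_1|$ and $|V_2|$ are both multiples of $3$ and the induced subgraphs $G[V_1]$ and $G[V_2]$ are both connected (equivalently, there is an edge cut separating $G$ into two connected subgraphs whose sizes are multiples of $3$). *)

From mathcomp Require Import all_boot.
Set Implicit Arguments. Unset Strict Implicit. Unset Printing Implicit Defensive.

Definition simple_graph (T : finType) (e : rel T) : Prop :=
  symmetric e /\ irreflexive e.

Definition induced_rel (T : finType) (e : rel T) (A : {set T}) : rel T :=
  [rel x y | [&& x \in A, y \in A & e x y]].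

(* G[A] is connected (A nonempty is required separately where needed) *)
Definition induced_connected (T : finType) (e : rel T) (A : {set T}) : Prop :=
  forall x y, x \in A -> y \in A -> connect (induced_rel e A) x y.

Definition connected_graph (T : finType) (e : rel T) : Prop :=
  forall x y : T, connect e x y.

Definition has_cycle_ge4 (T : finType) (e : rel T) : Prop :=
  exists c : seq T, [/\ 4 <= size c, uniq c & cycle e c].

Definition detachable (T : finType) (e : rel T) : Prop :=
  exists V1 V2 : {set T},
    [/\ V1 :&: V2 = set0, V1 :|: V2 = setT, V1 != set0 /\ V2 != set0,
        (3 %| #|V1|)%N /\ (3 %| #|V2|)%N
      & induced_connected e V1 /\ induced_connected e V2].

(* Choose the vertices of a cycle C of length at least 4 as roots and grow,
   one edge at a time, a partition of V(G) into connected parts, each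
   containing exactly one root.  Any arc of C, together with the parts rooted
   on it, induces a connected subgraph, and so does the complementary arc.
   If w_i is the size of the part rooted at the i-th vertex of C, two of the
   four prefix sums 0, w_0, w_0 + w_1, w_0 + w_1 + w_2 agree modulo 3, so some
   arc of at most three vertices carries a multiple of 3 vertices; since C has
   a fourth vertex, the complementary arc is nonempty, and it also carries a
   multiple of 3 vertices because 3 divides n. *)
From mathcomp Require Import all_boot zify.
Set Implicit Arguments. Unset Strict Implicit. Unset Printing Implicit Defensive.

Section InducedConnectivity.
Variables (T : finType) (e : rel T).
Hypothesis e_sym : symmetric e.

Lemma induced_rel_sym (A : {set T}) : symmetric (induced_rel e A).
Proof. by move=> x y; rewrite /induced_rel /= e_sym andbCA. Qed.

Lemma connect_induced_sym (A : {set T}) x y :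
  connect (induced_rel e A) x y = connect (induced_rel e A) y x.
Proof. by rewrite (sym_connect_sym (induced_rel_sym A)). Qed.

Lemma connect_induced_sub (A B : {set T}) x y : A \subset B ->
  connect (induced_rel e A) x y -> connect (induced_rel e B) x y.
Proof.
move=> sAB; apply: connect_sub => a b /and3P [aA bA eab].
by apply: connect1; rewrite /induced_rel /= eab !(subsetP sAB).
Qed.

Lemma induced_connected_setU1 (A : {set T}) a y :
  induced_connected e A -> a \in A -> e a y -> induced_connected e (y |: A).
Proof.
move=> connA aA eay.
have sA : A \subset y |: A by apply: subsetUr.
have to_a z : z \in y |: A -> connect (induced_rel e (y |: A)) z a.
  case/setU1P => [-> | zA]; last exact: connect_induced_sub (connA z a zA aA).
  by apply: connect1; rewrite /induced_rel /= setU11 (subsetP sA) // e_sym.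
move=> x z /to_a xa /to_a za.
by apply: connect_trans xa _; rewrite connect_induced_sym.
Qed.

Lemma path_connect_head (A : {set T}) x s : path e x s -> {subset x :: s <= A} ->
  {in x :: s, forall y, connect (induced_rel e A) x y}.
Proof.
elim: s x => [|z s IHs] x; first by move=> _ _ y /[!inE] /eqP ->.
move=> /= /andP [exz zs] sA y /[!inE] /orP [/eqP -> // | ys].
have sA' : {subset z :: s <= A} by move=> u us; apply: sA; rewrite inE us orbT.
apply: connect_trans (IHs z zs sA' y ys).
by apply: connect1; rewrite /induced_rel /= exz sA ?mem_head // sA' ?mem_head.
Qed.

End InducedConnectivity.

Lemma connect_crossing_edge (T : finType) (e : rel T) (P : pred T) a b :
  connect e a b -> P a -> ~~ P b -> exists x y, [&& e x y, P x & ~~ P y].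
Proof.
move=> /connectP [p]; elim: p a => [|z p IHp] a /=; first by move=> _ -> ->.
move=> /andP [eaz zp] bp Pa nPb; have [Pz | nPz] := boolP (P z).
  exact: IHp zp bp Pz nPb.
by exists a, z; rewrite eaz Pa nPz.
Qed.

Section RootedPartition.
Variables (T : finType) (e : rel T).
Hypotheses (e_sym : symmetric e) (e_conn : connected_graph e).

(* [f] sends every vertex of [D] to the root of its part. *)
Definition rooted_partition (R D : {set T}) (f : T -> T) : Prop :=
  [/\ R \subset D, {in R, forall r, f r = r}, {in D, forall x, f x \in R}
    & {in R, forall r, induced_connected e [set x in D | f x == r]}].

Lemma rooted_partition_setU1 R D f x y :
  rooted_partition R D f -> x \in D -> y \notin D -> e x y ->
  rooted_partition R (y |: D) (fun z => if z == y then f x else f z).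
Proof.
move=> [sRD f_id fR f_conn] xD yD exy.
have nRy : y \notin R by apply: contra yD => /(subsetP sRD).
split.
- exact: subset_trans sRD (subsetUr _ _).
- by move=> r rR; case: eqP => [ry | _]; [rewrite -ry rR in nRy | exact: f_id].
- by move=> z /setU1P [-> | zD]; rewrite ?eqxx ?fR //; case: eqP => // _; exact: fR.
move=> r rR.
have [fxr | nfxr] := eqVneq (f x) r.
  have -> : [set z in y |: D | (if z == y then f x else f z) == r] =
            y |: [set z in D | f z == r].
    apply/setP => z; rewrite !inE.
    by case: eqP => [-> | _]; rewrite ?fxr ?eqxx ?orbF ?(negbTE yD).
  have xr : x \in [set z in D | f z == r] by rewrite inE xD fxr eqxx.
  exact (induced_connected_setU1 e_sym (f_conn r rR) xr exy).
suff -> : [set z in y |: D | (if z == y then f x else f z) == r] =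
          [set z in D | f z == r] by exact (f_conn r rR).
apply/setP => z; rewrite !inE.
by case: eqP => [-> | _]; rewrite ?(negbTE nfxr) ?(negbTE yD).
Qed.

Lemma rooted_partition_total R D f : R != set0 -> rooted_partition R D f ->
  exists g, rooted_partition R [set: T] g.
Proof.
move=> /set0Pn [r0 r0R]; have [n] := ubnP #|~: D|.
elim: n D f => // n IHn D f ltDn fP.
have [DT | nDT] := eqVneq D [set: T]; first by exists f; rewrite -DT.
have /subsetPn [y _ yD] : ~~ ([set: T] \subset D) by rewrite subTset.
have [sRD _ _ _] := fP.
have [x [y' /and3P [exy xD y'D]]] :=
  connect_crossing_edge (P := mem D) (e_conn r0 y) (subsetP sRD r0 r0R) yD.
apply: IHn (rooted_partition_setU1 fP xD y'D exy).
have := cardsC D; have := cardsC (y' |: D); rewrite cardsU1 y'D; lia.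
Qed.

Lemma rooted_partition_exists R : R != set0 ->
  exists f, rooted_partition R [set: T] f.
Proof.
move=> R0; apply: (@rooted_partition_total R R id) => //.
split=> // r rR x y; rewrite !inE => /andP [_ /eqP ->] /andP [_ /eqP ->].
exact: connect0.
Qed.

End RootedPartition.

Section Arcs.
Variables (T : finType) (e : rel T) (c : seq T) (f : T -> T).
Hypotheses (e_sym : symmetric e) (fP : rooted_partition e [set x in c] [set: T] f).

Definition fibres (s : seq T) : {set T} := [set x | f x \in s].

Lemma fibresU s t : fibres (s ++ t) = fibres s :|: fibres t.
Proof. by apply/setP => x; rewrite !inE mem_cat. Qed.

Lemma fibresI_eq0 s t : uniq (s ++ t) -> fibres s :&: fibres t = set0.
Proof.
rewrite cat_uniq => /and3P [_ /hasPn st _].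
by apply/setP => x; rewrite !inE; apply/andP => -[fs /st /negP].
Qed.

Lemma card_fibres_cat s t : uniq (s ++ t) ->
  #|fibres (s ++ t)| = #|fibres s| + #|fibres t|.
Proof. by move=> st; rewrite fibresU -cardsUI fibresI_eq0 // cards0 addn0. Qed.

Lemma fibres_rot r : fibres (rot r c) = [set: T].
Proof.
have [_ _ fR _] := fP.
by apply/setP => x; have := fR x (in_setT x); rewrite !inE mem_rot.
Qed.

Lemma fibres_neq0 s : s != [::] -> {subset s <= c} -> fibres s != set0.
Proof.
case: s => // x s _ sc; have [_ f_id _ _] := fP.
by apply/set0Pn; exists x; rewrite inE f_id ?mem_head // inE sc ?mem_head.
Qed.

(* Each part is connected to its root, and consecutive roots are adjacent. *)
Lemma sorted_fibres_connected s : sorted e s -> {subset s <= c} ->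
  induced_connected e (fibres s).
Proof.
case: s => [_ _ x y | h t ht sc]; first by rewrite inE.
have [_ f_id fR f_conn] := fP.
have root_fibre z : z \in h :: t -> z \in fibres (h :: t).
  by move=> zs; rewrite inE f_id // inE sc.
have to_root x : x \in fibres (h :: t) ->
    connect (induced_rel e (fibres (h :: t))) (f x) x.
  move=> xs; have fxc := fR x (in_setT x).
  have sub : [set z in [set: T] | f z == f x] \subset fibres (h :: t).
    by apply/subsetP => z; rewrite !inE => /eqP ->; rewrite inE in xs.
  by apply: connect_induced_sub sub (f_conn _ fxc _ _ _ _);
    rewrite !inE ?(f_id _ fxc) eqxx.
have from_h := path_connect_head ht root_fibre.
have to_fibre z : z \in fibres (h :: t) -> connect (induced_rel e (fibres (h :: t))) h z.
  by move=> zs; apply: connect_trans (to_root z zs); apply: from_h; rewrite in_set in zs.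
move=> x y /to_fibre xh /to_fibre yh.
by apply: connect_trans yh; rewrite connect_induced_sym.
Qed.

Lemma arc_detachable s1 s2 r : s1 != [::] -> s2 != [::] ->
  s1 ++ s2 = rot r c -> uniq c -> cycle e c -> 3 %| #|T| -> 3 %| #|fibres s1| ->
  detachable e.
Proof.
move=> s1_ne s2_ne s12 uc cc dvdT dvd1.
have u12 : uniq (s1 ++ s2) by rewrite s12 rot_uniq.
have [sorted1 sorted2] : sorted e s1 * sorted e s2.
  apply: cat_sorted2; rewrite s12; move: cc; rewrite -(rot_cycle r).
  by case: (rot r c) => // x s; rewrite (cycle_path x) => /path_sorted.
have sub12 : {subset s1 ++ s2 <= c} by move=> x; rewrite s12 mem_rot.
exists (fibres s1), (fibres s2); split; first exact: fibresI_eq0.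
- by rewrite -fibresU s12 fibres_rot.
- by split; apply: fibres_neq0 => // x xs; apply: sub12; rewrite mem_cat xs ?orbT.
- split=> //; have := card_fibres_cat u12.
  by rewrite s12 fibres_rot cardsT => cardT; rewrite cardT dvdn_addr in dvdT.
- by split; apply: sorted_fibres_connected => // x xs; apply: sub12;
    rewrite mem_cat xs ?orbT.
Qed.

End Arcs.

Lemma pigeonhole_mod m (P : nat -> nat) : 0 < m ->
  exists i j, [/\ i < j, j <= m & P i = P j %[mod m]].
Proof.
move=> m_gt0; pose g (k : 'I_m.+1) : 'I_m := Ordinal (ltn_pmod (P k) m_gt0).
have /injectivePn [a [b nab /(congr1 val) /= eab]] : ~~ injectiveb g.
  by apply/injectiveP => /leq_card; rewrite !card_ord ltnn.
have [ab | ba | /val_inj eq_ab] := ltngtP a b.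
- by exists a, b; split; rewrite // -ltnS.
- by exists b, a; split; rewrite // -ltnS.
- by rewrite eq_ab eqxx in nab.
Qed.

Theorem lemma7 (T : finType) (e : rel T) :
  simple_graph e -> connected_graph e -> (3 %| #|T|)%N ->
  has_cycle_ge4 e -> detachable e.
Proof.
move=> [e_sym _] e_conn dvdT [c [size_c uc cc]].
have [f fP] : exists f, rooted_partition e [set x in c] [set: T] f.
  apply: rooted_partition_exists => //; apply/set0Pn.
  by case: c size_c {uc cc} => // x s _; exists x; rewrite inE mem_head.
have [i [j [ij j3 Pij]]] := pigeonhole_mod (fun k => #|fibres f (take k c)|) (isT : 0 < 3).
set arc := take (j - i) (drop i c); set rest := drop (j - i) (drop i c) ++ take i c.
have split_j : take j c = take i c ++ arc by rewrite -takeD; congr take; lia.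
have rot_i : arc ++ rest = rot i c by rewrite catA cat_take_drop.
have arc_ne : 0 < size arc by rewrite size_take_min size_drop; lia.
have rest_ne : 0 < size rest.
  by rewrite size_cat size_drop !size_take_min size_drop; lia.
apply: (arc_detachable e_sym fP _ _ rot_i uc cc dvdT); rewrite -?size_eq0 -?lt0n //.
move: Pij; rewrite /= split_j card_fibres_cat -?split_j ?take_uniq //; lia.
Qed.
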